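(* Call a matrix in $GL_n(\mathbb{F}[t])$ an elementary unit of $\mathcal{M}$ if it is of one of the following types: (i) $\sum_{i\ne a}E_{ii}+\alpha E_{aa}$ for some $\alpha\in\mathbb{F}\setminus\{0\}$ and $a\in\{1,\dots,n\}$; (ii) $I_n+t^N\alpha E_{ab}$ for some $N\ge 0$, $\alpha\in\mathbb{F}$ and $1\le a<b\le n$; (iii) $I_n+t^N\alpha E_{ab}$ for some $N>0$, $\alpha\in\mathbb{F}$ and $1\le b<a\le n$. Then every matrix in $\mathcal{M}$ can be brought into semi-reduced form by left multiplication with finitely many elementary units of $\mathcal{M}$. Consequently, every unit $M\in\mathcal{M}^\times$ of the ring $\mathcal{M}$ is a product of elementary units of $\mathcal{M}$.
   Context: Let $\mathbb{F}$ be a finite field with $q$ elements and $n\geq 2$ a divisor of $q-1$. $\mathcal{M}=\{(m_{ab})\in\mathbb{F}[t]^{n\times n}\mid m_{ab}(0)=0\text{ for }1\le b<a\le n\}$, a subring of $\mathbb{F}[t]^{n\times n}$. $E_{ab}\in\mathbb{F}^{n\times n}$ is the matrix with $1$ at position $(a,b)$ and $0$ elsewhere; $GL_n(\mathbb{F}[t])$ is the set of $n\times n$ polynomial matrices with determinant in $\mathbb{F}\setminus\{0\}$. For $M=(m_{ab})\in\mathcal{M}$ with $d_{ab}=\deg m_{ab}$ ($\deg 0=-\infty$), the degree matrix $\mathcal{D}(M)$ has entries $\mathcal{D}(M)_{ab}=nd_{ab}-a+b\in\mathbb{N}_0\cup\{-\infty\}$; a row of $\mathcal{D}(M)$ is trivial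 if all its entries are $-\infty$; $M$ is semi-reduced if the maxima of the non-trivial rows of $\mathcal{D}(M)$ lie in pairwise different columns. *)

From HB Require Import structures.
From mathcomp Require Import all_boot all_order all_algebra all_field.
Set Implicit Arguments. Unset Strict Implicit. Unset Printing Implicit Defensive.
Import GRing.Theory Num.Theory.
Local Open Scope ring_scope.

(* Matrices are indexed by 'I_n (0-based); all conditions only involve
   comparisons a < b or differences b - a of indices, hence are invariant
   under the shift from {1..n} to {0..n-1}. *)

Section Defs.
Variables (F : finFieldType) (n : nat).

Definition polymx := 'M[{poly F}]_n.

Definition inM (M : polymx) : Prop :=
  forall a b : 'I_n, (b < a)%N -> (M a b).[0] = 0.

Definition unitM (M : polymx) : Prop :=
  inM M /\ exists N : polymx, inM N /\ M *m N = 1%:M /\ N *m M = 1%:M.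

Definition Emx (a b : 'I_n) : polymx := delta_mx a b.

Definition elementary_unit (E : polymx) : Prop :=
  (exists (alpha : F) (a : 'I_n), alpha != 0 /\
     E = \sum_(i < n | i != a) Emx i i + alpha%:P *: Emx a a)
  \/ (exists (N : nat) (alpha : F) (a b : 'I_n), (a < b)%N /\
     E = 1%:M + ('X^N * alpha%:P) *: Emx a b)
  \/ (exists (N : nat) (alpha : F) (a b : 'I_n), (0 < N)%N /\ (b < a)%N /\
     E = 1%:M + ('X^N * alpha%:P) *: Emx a b).

Definition mxprod (s : seq polymx) : polymx := foldr mulmx 1%:M s.

(* Degree matrix entry D(M)_{ab} = n * deg m_ab - a + b, for m_ab != 0
   (entries with m_ab = 0 are -infinity and handled separately). *)
Definition Dentry (M : polymx) (a b : 'I_n) : int :=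
  (n * (size (M a b)).-1)%:Z - (a : nat)%:Z + (b : nat)%:Z.

Definition nontrivial_row (M : polymx) (a : 'I_n) : Prop :=
  exists b : 'I_n, M a b != 0.

Definition row_max_at (M : polymx) (a b : 'I_n) : Prop :=
  M a b != 0 /\ forall b' : 'I_n, M a b' != 0 -> Dentry M a b' <= Dentry M a b.

Definition semi_reduced (M : polymx) : Prop :=
  forall a a' b b' : 'I_n, a != a' ->
    row_max_at M a b -> row_max_at M a' b' -> b != b'.

End Defs.

(* Work with D(M)_{ab} + n = n deg m_{ab} + b + (n - a), a natural number.
   If two rows a <> a' of M have their maxima in the same column b with
   D_{ab} <= D_{a'b}, then N = deg m_{a'b} - deg m_{ab} >= 0, and N > 0 when
   a < a'; so adding alpha t^N times row a to row a' is left multiplication by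
   an elementary unit. For the right alpha it cancels the leading term of
   m_{a'b} and pushes every entry of row a' below the old maximum of that row.
   Hence the sum of the row maxima drops, and iterating ends in a semi-reduced
   matrix.

   If M is a unit of the ring, so is its semi-reduced form M' = P M. The columns
   of the row maxima of M' form a permutation sigma; since the offsets b - a sum
   to zero along every permutation, the sigma-term of the Leibniz expansion of
   det M' has strictly larger degree than all the other terms. As det M' is a
   nonzero constant, every m'_{i sigma(i)} is a nonzero constant; membership in
   the ring then forces sigma = id, and maximality of the diagonal kills the
   off-diagonal entries. So M' is an invertible constant diagonal matrix, a
   product of elementary units of type (i), and so is M = P^-1 M'. *)

From HB Require Import structures.
From mathcomp Require Import all_boot all_algebra perm zify.
From Stdlib Require Import Classical.
Set Implicit Arguments. Unset Strict Implicit. Unset Printing Implicit Defensive.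
Import GRing.Theory Num.Theory.
Local Open Scope ring_scope.

Lemma ltn_sum (I : finType) (f g : I -> nat) (j : I) :
  (forall i, f i <= g i)%N -> (f j < g j)%N -> (\sum_i f i < \sum_i g i)%N.
Proof.
move=> le_fg lt_j; rewrite (bigD1 j) //= [X in (_ < X)%N](bigD1 j) //=.
by rewrite -addSn leq_add // leq_sum.
Qed.

Lemma perm_geq_id n (s : 'S_n) : (forall i : 'I_n, i <= s i)%N -> s = 1%g.
Proof.
move=> ge_s; apply/permP => i; rewrite perm1; apply/val_inj/eqP.
rewrite eqn_leq ge_s andbT leqNgt; apply/negP => lt_i.
have := @ltn_sum _ (fun k : 'I_n => k : nat) (fun k => s k) i ge_s lt_i.
by rewrite (reindex_inj (@perm_inj _ s)) ltnn.
Qed.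

Lemma size_addp_lt (R : nzRingType) (p q : {poly R}) :
  p != 0 -> size q = size p -> lead_coef p + lead_coef q = 0 ->
  (size (p + q)%R < size p)%N.
Proof.
move=> p0 eq_size lead_sum; rewrite (polySpred p0) ltnS.
apply/leq_sizeP => j; rewrite leq_eqVlt coefD => /predU1P [<-|lt_j].
  by rewrite -lead_coefE -eq_size -lead_coefE.
by rewrite !nth_default ?addr0 // ?eq_size (polySpred p0).
Qed.

Lemma weighted_size_addp_lt (R : nzRingType) (k c m : nat) (p q : {poly R}) :
  (p != 0 -> (k * (size p).-1 + c < m)%N) -> (q != 0 -> (k * (size q).-1 + c < m)%N) ->
  p + q != 0 -> (k * (size (p + q)%R).-1 + c < m)%N.
Proof.
move=> bound_p bound_q pq0.
have pq_gt0 : (0 < size (p + q)%R)%N by rewrite size_poly_gt0.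
have mono (r : {poly R}) : (size (p + q)%R <= size r)%N ->
    (k * (size (p + q)%R).-1 <= k * (size r).-1)%N.
  by move=> le_r; rewrite leq_mul2l -!subn1 leq_sub2r ?orbT.
have := size_polyD p q; case: (leqP (size p) (size q)) => _.
- move=> le_q; apply: leq_ltn_trans (bound_q _).
    by rewrite leq_add2r mono.
  by rewrite -size_poly_gt0 (leq_trans pq_gt0).
- move=> le_p; apply: leq_ltn_trans (bound_p _).
    by rewrite leq_add2r mono.
  by rewrite -size_poly_gt0 (leq_trans pq_gt0).
Qed.

Lemma size_prod_pred (R : idomainType) (I : finType) (f : I -> {poly R}) :
  (forall i, f i != 0) -> size (\prod_i f i) = (\sum_i (size (f i)).-1).+1.
Proof.
move=> f0; rewrite size_prod //.
have -> : (\sum_i size (f i) = \sum_i (size (f i)).-1 + #|I|)%N.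
  by rewrite -sum1_card -big_split; apply: eq_bigr => i _; rewrite /= addn1 -polySpred.
by rewrite -addSn addnK.
Qed.

Lemma transvection_mulmxE (R : nzRingType) n (M : 'M[R]_n) c (a a' i j : 'I_n) :
  ((1%:M + c *: delta_mx a' a) *m M) i j = M i j + (if i == a' then c * M a j else 0).
Proof.
rewrite mulmxDl mul1mx -scalemxAl !mxE; congr (_ + _).
rewrite (bigD1 a) //= big1 ?addr0 => [|k /negbTE nk]; last by rewrite mxE nk andbF mul0r.
by rewrite mxE eqxx andbT; case: (i == a'); rewrite ?mul1r ?mul0r ?mulr0.
Qed.

Lemma transvection_inv (R : comNzRingType) n c (x y : 'I_n) : x != y ->
  (1%:M + (- c) *: delta_mx x y) *m (1%:M + c *: delta_mx x y) = 1%:M :> 'M[R]_n.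
Proof.
move=> xy; rewrite mulmxDl mul1mx mulmxDr mulmx1 -scalemxAl -scalemxAr.
rewrite mul_delta_mx_0 1?eq_sym // !scaler0 addr0 addrAC -addrA -scalerDl.
by rewrite addNr scale0r addr0.
Qed.

Lemma sum_delta_diag_mx (R : nzRingType) n (a : 'I_n) (c : R) :
  \sum_(i < n | i != a) delta_mx i i + c *: delta_mx a a
  = diag_mx (\row_i (if i == a then c else 1)).
Proof.
rewrite diag_mx_sum_delta [RHS](bigD1 a) //= addrC mxE eqxx; congr (_ + _).
by apply: eq_bigr => i /negbTE ia; rewrite mxE ia scale1r.
Qed.

Lemma mxprod_cat (F : finFieldType) n (s1 s2 : seq (polymx F n)) :
  mxprod (s1 ++ s2) = mxprod s1 *m mxprod s2.
Proof. by elim: s1 => [|E s IH] /=; rewrite ?mul1mx // /mxprod /= -mulmxA -IH. Qed.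

Section DegreeMatrix.
Variables (F : finFieldType) (n : nat).
Implicit Types (M : polymx F n) (a b : 'I_n).

Definition Dshift M a b : nat := (n * (size (M a b)).-1 + b + (n - a))%N.
Definition rowmax M a : nat := \max_(b | M a b != 0) Dshift M a b.
Definition potential M : nat := \sum_a rowmax M a.

Lemma Dentry_Dshift M a b : Dentry M a b = (Dshift M a b)%:Z - n%:Z.
Proof. by rewrite /Dentry /Dshift; have := ltn_ord a; move: (n * _)%N => k; lia. Qed.

Lemma Dshift_gt0 M a b : (0 < Dshift M a b)%N.
Proof. by rewrite /Dshift addn_gt0 subn_gt0 ltn_ord orbT. Qed.

Lemma leq_Dshift_rowmax M a b : M a b != 0 -> (Dshift M a b <= rowmax M a)%N.
Proof. by move=> Mab0; exact: leq_bigmax_cond. Qed.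

Lemma row_max_atE M a b :
  row_max_at M a b <-> M a b != 0 /\ Dshift M a b = rowmax M a.
Proof.
have Dentry_le b' : (Dentry M a b' <= Dentry M a b) = (Dshift M a b' <= Dshift M a b)%N.
  by rewrite !Dentry_Dshift lerD2r lez_nat.
split=> -[Mab0 max_b]; split=> //.
  apply/eqP; rewrite eqn_leq leq_Dshift_rowmax //=.
  by apply/bigmax_leqP => b' Mab'0; rewrite -Dentry_le max_b.
by move=> b' Mab'0; rewrite Dentry_le max_b leq_Dshift_rowmax.
Qed.

(* Distinct columns give distinct values in a row, as they differ modulo n. *)
Lemma Dshift_lt_rowmax M a b c : row_max_at M a c -> M a b != 0 -> b != c ->
  (Dshift M a b < rowmax M a)%N.
Proof.
case/row_max_atE=> _ max_c Mab0 bc.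
rewrite ltn_neqAle leq_Dshift_rowmax // andbT -max_c.
apply: contra bc; rewrite /Dshift eqn_add2r => /eqP/(congr1 (modn^~ n)).
by rewrite !(mulnC n) !modnMDl !modn_small // => eq_bc; apply/eqP/val_inj.
Qed.

Lemma exists_row_max_at M a : nontrivial_row M a -> exists b, row_max_at M a b.
Proof.
case=> b0 Mab0_0.
have [|b Mab0 max_b] := @eq_bigmax_cond _ (fun b => M a b != 0) (Dshift M a).
  by apply/card_gt0P; exists b0.
by exists b; apply/row_max_atE.
Qed.

Lemma rowmax_ltP M a m : (0 < m)%N ->
  (forall b, M a b != 0 -> (Dshift M a b < m)%N) -> (rowmax M a < m)%N.
Proof.
move=> m_gt0 lt_m; rewrite -(prednK m_gt0) ltnS; apply/bigmax_leqP => b Mab0.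
by rewrite -ltnS prednK // lt_m.
Qed.

Lemma eq_rowmax M M' a : (forall b, M' a b = M a b) -> rowmax M' a = rowmax M a.
Proof. by move=> eqM; apply: eq_big => b; rewrite /Dshift eqM. Qed.

End DegreeMatrix.

Section ReductionStep.
Variables (F : finFieldType) (n : nat) (M : polymx F n) (a a' b : 'I_n).
Hypotheses (neq_aa' : a != a') (max_ab : row_max_at M a b)
  (max_a'b : row_max_at M a' b) (le_Dshift : (Dshift M a b <= Dshift M a' b)%N).

Let p := M a' b.
Let q := M a b.
Let N := ((size p).-1 - (size q).-1)%N.
Let alpha := - lead_coef p / lead_coef q.
(* Adds alpha t^N times row a to row a', cancelling the leading term of p. *)
Let E := 1%:M + ('X^N * alpha%:P) *: Emx F a' a.

Let p0 : p != 0. Proof. by case: max_a'b. Qed.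
Let q0 : q != 0. Proof. by case: max_ab. Qed.

Let alpha0 : alpha != 0.
Proof. by rewrite mulf_neq0 ?invr_eq0 ?oppr_eq0 ?lead_coef_eq0. Qed.

Let le_Dshift_pq :
  (n * (size q).-1 + (n - a) <= n * (size p).-1 + (n - a'))%N.
Proof. by move: le_Dshift; rewrite /Dshift -/p -/q; lia. Qed.

Lemma size_reduced_entry : size p = (N + size q)%N.
Proof.
have le_deg : ((size q).-1 <= (size p).-1)%N.
  rewrite leqNgt; apply/negP => lt_deg; have := le_Dshift_pq.
  have : (n * (size p).-1.+1 <= n * (size q).-1)%N by rewrite leq_mul2l lt_deg orbT.
  by have := ltn_ord a; rewrite mulnS; lia.
by rewrite (polySpred p0) (polySpred q0) /N addnS subnK.
Qed.

Lemma reducer_elementary : elementary_unit E.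
Proof.
have := le_Dshift_pq; case: (ltngtP a a') => [lt_aa'|lt_a'a|eq_aa'] le_pq.
- right; right; exists N, alpha, a', a; split=> //.
  have : (n * (size q).-1 < n * (size p).-1)%N by have := ltn_ord a'; lia.
  by rewrite ltn_mul2l /N => /andP [_]; lia.
- by right; left; exists N, alpha, a', a.
- by move: neq_aa'; rewrite (val_inj eq_aa') eqxx.
Qed.

Lemma reducer_mulmxE i j :
  (E *m M) i j = M i j + (if i == a' then alpha *: M a j * 'X^N else 0).
Proof.
rewrite transvection_mulmxE; case: (i == a') => //.
by rewrite -mul_polyC [_ * alpha%:P]mulrC mulrAC.
Qed.

Lemma size_shifted_entry j : M a j != 0 ->
  size (alpha *: M a j * 'X^N) = (N + size (M a j))%N.
Proof. by move=> Maj0; rewrite size_mulXn ?size_scale // scaler_eq0 negb_or alpha0. Qed.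

(* The leading term of p cancels; every other entry of row a' is bounded
   using the maximality of column b in rows a' and a. *)
Lemma rowmax_reduced_lt : (rowmax (E *m M) a' < rowmax M a')%N.
Proof.
case/row_max_atE: (max_a'b) => _ max_p; case/row_max_atE: (max_ab) => _ max_q.
rewrite -max_p; apply: rowmax_ltP => [|j]; first exact: Dshift_gt0.
rewrite {1}/Dshift reducer_mulmxE eqxx -addnA.
have [->|jb] := eqVneq j b => r0.
  have lead_cancel : lead_coef p + lead_coef (alpha *: q * 'X^N) = 0.
    by rewrite lead_coefM lead_coefZ lead_coefXn mulr1 divfK ?lead_coef_eq0 ?addrN.
  have := size_addp_lt p0 _ lead_cancel; rewrite size_shifted_entry // -size_reduced_entry.
  move=> /(_ erefl) lt_size; rewrite /Dshift -/p -addnA ltn_add2r ltn_pmul2l.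
    move: lt_size r0; rewrite -/p -/q -size_poly_gt0.
    by move: (size _) (size p) => x y; lia.
  exact: leq_ltn_trans (ltn_ord a).
apply: weighted_size_addp_lt r0 => [Ma'j0|shift0].
  by rewrite addnA max_p; exact: Dshift_lt_rowmax max_a'b Ma'j0 jb.
have Maj0 : M a j != 0 by apply: contraNneq shift0 => ->; rewrite scaler0 mul0r.
have := Dshift_lt_rowmax max_ab Maj0 jb; rewrite size_shifted_entry // -max_q.
have := size_reduced_entry; have := le_Dshift_pq.
rewrite /Dshift -/p -/q (polySpred Maj0) (polySpred q0) (polySpred p0) /=; nia.
Qed.

Lemma rowmax_reduced_other i : i != a' -> rowmax (E *m M) i = rowmax M i.
Proof. by move=> /negbTE ia'; apply: eq_rowmax => j; rewrite reducer_mulmxE ia' addr0. Qed.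

Lemma potential_reduction_step :
  exists E, elementary_unit E /\ (potential (E *m M) < potential M)%N.
Proof.
exists E; split; first exact: reducer_elementary.
rewrite /potential (bigD1 a') //= [X in (_ < X)%N](bigD1 a') //=.
by rewrite (eq_bigr _ rowmax_reduced_other) ltn_add2r rowmax_reduced_lt.
Qed.

End ReductionStep.

Lemma semi_reduction (F : finFieldType) n (M : polymx F n) :
  exists s : seq (polymx F n),
    (forall E, E \in s -> elementary_unit E) /\ semi_reduced (mxprod s *m M).
Proof.
have [k] := ubnP (potential M); elim: k M => // k IH M lt_k.
have [M_red|M_nred] := classic (semi_reduced M); first by exists [::]; rewrite mul1mx.
have [a [a' [b [aa' [max_a max_a']]]]] :
    exists a a' b, a != a' /\ row_max_at M a b /\ row_max_at M a' b.
  apply: NNPP => none; apply: M_nred => a a' b b' aa' max_a max_a'.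
  by apply/eqP => eq_b; apply: none; exists a, a', b; rewrite {2}eq_b.
have [E [E_el lt_E]] : exists E, elementary_unit E /\ (potential (E *m M) < potential M)%N.
  have [le|/ltnW le] := leqP (Dshift M a b) (Dshift M a' b).
    exact: potential_reduction_step max_a max_a' le.
  by apply: potential_reduction_step max_a' max_a le; rewrite eq_sym.
have [s [s_el s_red]] := IH (E *m M) (leq_trans lt_E lt_k).
exists (s ++ [:: E]); split.
  by move=> E'; rewrite mem_cat inE => /orP [/s_el|/eqP ->].
by rewrite mxprod_cat /mxprod /= mulmx1 -mulmxA.
Qed.

Section ElementaryUnits.
Variables (F : finFieldType) (n : nat).
Implicit Types (M : polymx F n) (s : seq (polymx F n)).

Lemma inM_mul M1 M2 : inM M1 -> inM M2 -> inM (M1 *m M2).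
Proof.
move=> M1_in M2_in a b lt_ba; rewrite mxE horner_sum big1 // => c _.
rewrite hornerM; have [lt_ca|le_ac] := ltnP c a; first by rewrite M1_in ?mul0r.
by rewrite M2_in ?mulr0 // (leq_trans lt_ba).
Qed.

Lemma inM_diag_mx (d : 'rV[{poly F}]_n) : @inM F n (diag_mx d).
Proof. by move=> a b /ltn_eqF ba; rewrite mxE eq_sym -val_eqE /= ba mulr0n horner0. Qed.

Lemma elementary_unit_inM (E : polymx F n) : elementary_unit E -> inM E.
Proof.
case=> [[alpha [c [_ ->]]]|[[N [alpha [x [y [lt_xy ->]]]]]|
         [N [alpha [x [y [N_gt0 [_ ->]]]]]]]].
- by rewrite /Emx sum_delta_diag_mx; exact: inM_diag_mx.
- move=> a b lt_ba; rewrite !mxE eq_sym -val_eqE /= (ltn_eqF lt_ba) add0r.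
  suff -> : (a == x) && (b == y) = false by rewrite mulr0 horner0.
  apply/andP => -[/eqP eq_ax /eqP eq_by].
  by move: lt_ba; rewrite eq_ax eq_by ltnNge ltnW.
- move=> a b lt_ba; rewrite !mxE eq_sym -val_eqE /= (ltn_eqF lt_ba) add0r.
  by rewrite !hornerE expr0n eqn0Ngt N_gt0 !mul0r.
Qed.

Lemma mxprod_inM s : (forall E, E \in s -> elementary_unit E) -> inM (mxprod s).
Proof.
elim: s => [|E s IH] s_el; first by rewrite /mxprod /= -diag_const_mx; apply: inM_diag_mx.
apply: inM_mul; first by apply: elementary_unit_inM; apply: s_el; rewrite mem_head.
by apply: IH => E' E's; apply: s_el; rewrite in_cons E's orbT.
Qed.

Lemma elementary_unit_inv (E : polymx F n) : elementary_unit E ->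
  exists E', elementary_unit E' /\ E' *m E = 1%:M.
Proof.
case=> [[alpha [c [alpha0 ->]]]|[[N [alpha [x [y [lt_xy ->]]]]]|
         [N [alpha [x [y [N_gt0 [lt_yx ->]]]]]]]].
- exists (\sum_(i < n | i != c) Emx F i i + alpha^-1%:P *: Emx F c c); split.
    by left; exists alpha^-1, c; rewrite invr_eq0.
  rewrite /Emx !sum_delta_diag_mx mulmx_diag -diag_const_mx; congr diag_mx.
  by apply/rowP => i; rewrite !mxE; case: (i == c); rewrite ?mulr1 // -polyCM mulVf.
- exists (1%:M + ('X^N * (- alpha)%:P) *: Emx F x y); split.
    by right; left; exists N, (- alpha), x, y.
  by rewrite polyCN mulrN transvection_inv // neq_ltn lt_xy.
- exists (1%:M + ('X^N * (- alpha)%:P) *: Emx F x y); split.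
    by right; right; exists N, (- alpha), x, y.
  by rewrite polyCN mulrN transvection_inv // neq_ltn lt_yx orbT.
Qed.

Lemma mxprod_inv s : (forall E, E \in s -> elementary_unit E) ->
  exists s', (forall E, E \in s' -> elementary_unit E) /\ mxprod s' *m mxprod s = 1%:M.
Proof.
elim: s => [|E s IH] s_el; first by exists [::]; rewrite mulmx1.
have [s' [s'_el inv_s]] := IH (fun E' E's => s_el E' (@mem_behead _ (E :: s) E' E's)).
have [E' [E'_el inv_E]] := elementary_unit_inv (s_el E (mem_head E s)).
exists (s' ++ [:: E']); split.
  by move=> E''; rewrite mem_cat inE => /orP [/s'_el|/eqP ->].
by rewrite mxprod_cat /mxprod /= mulmx1 -mulmxA (mulmxA E') inv_E mul1mx.
Qed.

Lemma diag_mx_mxprod (d : 'I_n -> F) : (forall i, d i != 0) ->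
  exists s, (forall E, E \in s -> elementary_unit E) /\
    diag_mx (\row_i (d i)%:P) = mxprod s.
Proof.
move=> d0; pose g c := \sum_(i < n | i != c) Emx F i i + (d c)%:P *: Emx F c c.
have mxprod_g (r : seq 'I_n) : uniq r ->
    mxprod (map g r) = diag_mx (\row_i (if i \in r then (d i)%:P else 1)).
  elim: r => [_|c r IH /andP [cr r_uniq]] /=.
    by rewrite -diag_const_mx; congr diag_mx; apply/rowP => i; rewrite !mxE.
  rewrite /mxprod /= -/(mxprod _) IH // /g /Emx sum_delta_diag_mx mulmx_diag.
  congr diag_mx; apply/rowP => i; rewrite !mxE in_cons.
  by have [->|] := eqVneq i c; rewrite ?(negbTE cr) ?mulr1 ?mul1r.
exists (map g (enum 'I_n)); split.
  by move=> E /mapP [c _ ->]; left; exists (d c), c.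
by rewrite mxprod_g ?enum_uniq //; congr diag_mx; apply/rowP => i; rewrite !mxE mem_enum.
Qed.

End ElementaryUnits.

Lemma unitmx_row_neq0 (R : comUnitRingType) n (A : 'M[R]_n) (a : 'I_n) :
  A \in unitmx -> exists b, A a b != 0.
Proof.
move=> A_unit; apply/existsP; apply: contraT; rewrite negb_exists => /forallP row0.
have := mulmxV A_unit; move/matrixP/(_ a a); rewrite !mxE eqxx big1 => [|b _].
  by move/eqP; rewrite eq_sym oner_eq0.
by rewrite (eqP (negbNE (row0 b))) mul0r.
Qed.

Lemma constant_root0_eq0 (R : nzRingType) (p : {poly R}) :
  (size p <= 1)%N -> p.[0] = 0 -> p = 0.
Proof. by move=> /size1_polyC pC; rewrite pC hornerC => ->. Qed.

Section SemiReducedUnits.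
Variables (F : finFieldType) (n : nat).
Implicit Types (M : polymx F n) (s t : 'S_n).

Definition leibniz_deg M s : nat := \sum_i (size (M i (s i))).-1.

Lemma semi_reduced_max_perm M : semi_reduced M -> (forall a, nontrivial_row M a) ->
  exists s, forall a, row_max_at M a (s a).
Proof.
move=> M_red nontriv.
have [tau max_tau] := fin_all_exists (fun a => exists_row_max_at (nontriv a)).
have tau_inj : injective tau.
  move=> a a' eq_tau; apply/eqP; apply: contraT => aa'.
  by have := M_red _ _ _ _ aa' (max_tau a) (max_tau a'); rewrite eq_tau eqxx.
by exists (perm tau_inj) => a; rewrite permE.
Qed.

Lemma sum_Dshift_perm M s : (\sum_i Dshift M i (s i) =
  n * leibniz_deg M s + \sum_(i < n) (i : nat) + \sum_(i < n) (n - i))%N.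
Proof.
rewrite /Dshift !big_split /= -big_distrr /=; congr (_ + _ + _).
by rewrite [RHS](reindex_inj (@perm_inj _ s)).
Qed.

Lemma leibniz_deg_lt M s t : (forall i, row_max_at M i (s i)) ->
  (forall i, M i (t i) != 0) -> t != s -> (leibniz_deg M t < leibniz_deg M s)%N.
Proof.
move=> max_s Mt0 ts.
have [j tj_sj] : exists j, t j != s j.
  apply/existsP; apply: contraNT ts; rewrite negb_exists => /forallP eq_ts.
  by apply/eqP/permP => i; apply/eqP/negbNE.
have lt_Dshift : (\sum_i Dshift M i (t i) < \sum_i Dshift M i (s i))%N.
  apply: (@ltn_sum _ _ _ j) => [i|].
    by case/row_max_atE: (max_s i) => _ ->; apply: leq_Dshift_rowmax.
  by case/row_max_atE: (max_s j) => _ ->; apply: Dshift_lt_rowmax (max_s j) _ tj_sj.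
move: lt_Dshift; rewrite !sum_Dshift_perm !ltn_add2r ltn_pmul2l //.
exact: leq_ltn_trans (ltn_ord j).
Qed.

Lemma coef_det_max_perm M s : (forall i, row_max_at M i (s i)) ->
  (\det M)`_(leibniz_deg M s) != 0.
Proof.
move=> max_s.
have coef_term t k :
    ((-1) ^+ t * \prod_i M i (t i))`_k = (-1) ^+ t * (\prod_i M i (t i))`_k.
  by rewrite -(rmorph_sign polyC) coefCM.
have -> : \det M = \sum_(t : 'S_n) (-1) ^+ t * \prod_i M i (t i) by [].
rewrite coef_sum (bigD1 s) //= [X in _ + X]big1 ?addr0 => [|t ts].
  rewrite coef_term mulf_neq0 ?signr_eq0 //.
  have Ms0 i : M i (s i) != 0 by case: (max_s i).
  rewrite -[leibniz_deg M s]/((leibniz_deg M s).+1.-1) -size_prod_pred //.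
  by rewrite -lead_coefE lead_coef_eq0; apply/prodf_neq0 => i _.
rewrite coef_term.
have [/forallP Mt0|/forallPn [i /negPn /eqP Mti0]] := boolP [forall i, M i (t i) != 0].
- by rewrite nth_default ?mulr0 // size_prod_pred // leibniz_deg_lt.
- by rewrite (bigD1 i) //= Mti0 mul0r coef0 mulr0.
Qed.

Lemma diag_max_offdiag_eq0 M : inM M -> (forall i, row_max_at M i i) ->
  (forall i, size (M i i) <= 1)%N -> forall i j, i != j -> M i j = 0.
Proof.
move=> M_in max_diag size_diag i j ij; apply/eqP; apply: contraT => Mij0.
have := Dshift_lt_rowmax (max_diag i) Mij0; rewrite eq_sym => /(_ ij).
case/row_max_atE: (max_diag i) => _ <-; rewrite /Dshift => lt_Dshift.
have deg_ii : (size (M i i)).-1 = 0%N by move: (size_diag i); case: (size _) => [|[|]].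
have lt_n : (n * (size (M i j)).-1 + j + (n - i) < n)%N.
  by move: lt_Dshift; rewrite deg_ii; have := ltn_ord i; lia.
have size_Mij : (size (M i j) <= 1)%N by move: lt_n; rewrite -subn1; nia.
have lt_ji : (j < i)%N by move: lt_n; lia.
by move: Mij0; rewrite (constant_root0_eq0 size_Mij (M_in _ _ lt_ji)) eqxx.
Qed.

Lemma semi_reduced_unit_diag M : inM M -> M \in unitmx -> semi_reduced M ->
  exists d : 'I_n -> F, (forall i, d i != 0) /\ M = diag_mx (\row_i (d i)%:P).
Proof.
move=> M_in M_unit M_red.
have [s max_s] := semi_reduced_max_perm M_red (fun a => unitmx_row_neq0 a M_unit).
have Ms0 i : M i (s i) != 0 by case: (max_s i).
have deg0 : leibniz_deg M s = 0%N.
  have size_det : size (\det M) = 1%N.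
    by move: M_unit; rewrite unitmxE poly_unitE => /andP [/eqP].
  apply/eqP; rewrite -leqn0 -ltnS -size_det ltnNge.
  by apply: contraL (coef_det_max_perm max_s) => le_size; rewrite nth_default ?eqxx.
have size_Ms i : (size (M i (s i)) <= 1)%N.
  by move/eqP: deg0; rewrite sum_nat_eq0 => /forallP /(_ i) /eqP; case: (size _) => [|[|]].
have s1 : s = 1%g.
  apply: perm_geq_id => i; rewrite leqNgt; apply/negP => lt_si.
  by have := Ms0 i; rewrite (constant_root0_eq0 (size_Ms i) (M_in _ _ lt_si)) eqxx.
have size_diag i : (size (M i i) <= 1)%N by have := size_Ms i; rewrite s1 perm1.
have max_diag i : row_max_at M i i by have := max_s i; rewrite s1 perm1.
have offdiag0 := diag_max_offdiag_eq0 M_in max_diag size_diag.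
exists (fun i => (M i i)`_0); split=> [i|].
  by have := Ms0 i; rewrite s1 perm1 {1}(size1_polyC (size_diag i)) polyC_eq0.
apply/matrixP => i j; rewrite !mxE; have [<-|ij] := eqVneq i j; last by rewrite offdiag0.
by rewrite mulr1n -(size1_polyC (size_diag i)).
Qed.

End SemiReducedUnits.

Theorem theorem3p13 (F : finFieldType) (n : nat)
  (hn : (2 <= n)%N) (hdiv : (n %| #|F|.-1)%N) :
  (forall M : polymx F n, inM M ->
     exists s : seq (polymx F n),
       (forall E, E \in s -> elementary_unit E) /\ semi_reduced (mxprod s *m M))
  /\
  (forall M : polymx F n, unitM M ->
     exists s : seq (polymx F n),
       (forall E, E \in s -> elementary_unit E) /\ M = mxprod s).
Proof.
split=> [M _|M [M_in [M' [_ [MM' _]]]]]; first exact: semi_reduction.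
have [s [s_el red]] := semi_reduction M.
have [s' [s'_el inv_s]] := mxprod_inv s_el.
have red_in : inM (mxprod s *m M) by apply: inM_mul => //; exact: mxprod_inM.
have red_unit : mxprod s *m M \in unitmx.
  by rewrite unitmx_mul (mulmx1_unit inv_s).2 (mulmx1_unit MM').1.
have [d [d0 red_diag]] := semi_reduced_unit_diag red_in red_unit red.
have [sd [sd_el diag_prod]] := diag_mx_mxprod d0.
exists (s' ++ sd); split; first by move=> E; rewrite mem_cat => /orP [/s'_el|/sd_el].
by rewrite mxprod_cat -diag_prod -red_diag mulmxA inv_s mul1mx.
Qed.
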